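(* Let $\Bbbk$ be a commutative ring of global dimension zero, $C$ a $\Bbbk$-coalgebra with comultiplication $\Delta$, and $M$ a right $C$-comodule that is finitely generated as a $\Bbbk$-module, with coaction $\rho\colon M\to M\otimes C$. The $\Bbbk$-linear map $\mathrm{tr}^C\colon\mathrm{End}_C(M)\to C$, $\mathrm{tr}^C(f)=\mathrm{tr}(\rho\circ f)$, is a cotrace, i.e. $\Delta(\mathrm{tr}^C(f))=\tau(\Delta(\mathrm{tr}^C(f)))$ for all $f\in\mathrm{End}_C(M)$. In particular $\mathrm{tr}^C$ factors uniquely through the inclusion $\mathrm{coHH}_0(C)\hookrightarrow C$.
   Context: $\tau$ is the swap $C\otimes C\to C\otimes C$. $\mathrm{End}_C(M)$ is the $\Bbbk$-module of right $C$-colinear endomorphisms. $\mathrm{coHH}_0(C)=\ker(\Delta-\tau\circ\Delta)$. For a $\Bbbk$-linear $g\colon M\to M\otimes C$, its twisted trace is $\mathrm{tr}(g)=\sum_i (e_i^*\otimes\mathrm{id}_C)(g(e_i))\in C$ for a $\Bbbk$-basis $(e_i)$ of $M$ with dual basis $(e_i^* )$; thus $\mathrm{tr}^C(f)=\sum_i\sum e_i^*(f(e_{i(0)}))e_{i(1)}$ in Sweedler notation $\rho(m)=\sum m_{(0)}\otimes m_{(1)}$. *)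

From HB Require Import structures.
From mathcomp Require Import all_boot all_order all_algebra.
Set Implicit Arguments. Unset Strict Implicit. Unset Printing Implicit Defensive.
Import GRing.Theory.
Local Open Scope ring_scope.

Definition lin (R : comPzRingType) (A B : lmodType R) (f : A -> B) : Prop :=
  forall (a : R) (x y : A), f (a *: x + y) = a *: f x + f y.

Definition bilin (R : comPzRingType) (A B N : lmodType R) (b : A -> B -> N) : Prop :=
  (forall y, lin (fun x => b x y)) /\ (forall x, lin (b x)).

Definition trilin (R : comPzRingType) (A B D N : lmodType R)
  (t : A -> B -> D -> N) : Prop :=
  [/\ forall y z, lin (fun x => t x y z),
      forall x z, lin (fun y => t x y z) &
      forall x y, lin (t x y)].

(* Elements of A (x)_k B are represented by finite sums of pure tensors
   (a seq of pairs); two representatives are identified exactly when they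
   are identified in the tensor product, i.e. when every bilinear map
   (universal property) takes the same value on them. *)
Definition tensor_eq (R : comPzRingType) (A B : lmodType R)
  (s t : seq (A * B)) : Prop :=
  forall (N : lmodType R) (b : A -> B -> N), bilin b ->
    \sum_(p <- s) b p.1 p.2 = \sum_(p <- t) b p.1 p.2.

Definition tensor3_eq (R : comPzRingType) (A B D : lmodType R)
  (s t : seq (A * B * D)) : Prop :=
  forall (N : lmodType R) (b : A -> B -> D -> N), trilin b ->
    \sum_(p <- s) b p.1.1 p.1.2 p.2 = \sum_(p <- t) b p.1.1 p.1.2 p.2.

Definition tlin (R : comPzRingType) (X A B : lmodType R) (f : X -> seq (A * B)) : Prop :=
  forall (a : R) (x y : X),
    tensor_eq (f (a *: x + y)) ([seq (a *: p.1, p.2) | p <- f x] ++ f y).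

Definition tswap (A B : Type) (s : seq (A * B)) : seq (B * A) :=
  [seq (p.2, p.1) | p <- s].

Definition is_coalgebra (R : comPzRingType) (C : lmodType R)
  (Delta : C -> seq (C * C)) (eps : C -> R^o) : Prop :=
  [/\ tlin Delta, lin eps,
      (* coassociativity: (Delta (x) id) Delta = (id (x) Delta) Delta *)
      forall c, tensor3_eq
        (flatten [seq [seq (q.1, q.2, p.2) | q <- Delta p.1] | p <- Delta c])
        (flatten [seq [seq (p.1, q.1, q.2) | q <- Delta p.2] | p <- Delta c]),
      forall c, \sum_(p <- Delta c) (eps p.1 : R) *: p.2 = c &
      forall c, \sum_(p <- Delta c) (eps p.2 : R) *: p.1 = c].

Definition is_right_comodule (R : comPzRingType) (C M : lmodType R)
  (Delta : C -> seq (C * C)) (eps : C -> R^o) (rho : M -> seq (M * C)) : Prop :=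
  [/\ tlin rho,
      (* (rho (x) id) rho = (id (x) Delta) rho *)
      forall m, tensor3_eq
        (flatten [seq [seq (q.1, q.2, p.2) | q <- rho p.1] | p <- rho m])
        (flatten [seq [seq (p.1, q.1, q.2) | q <- Delta p.2] | p <- rho m]) &
      forall m, \sum_(p <- rho m) (eps p.2 : R) *: p.1 = m].

Definition colinear (R : comPzRingType) (C M : lmodType R)
  (rho : M -> seq (M * C)) (f : M -> M) : Prop :=
  lin f /\ forall m, tensor_eq (rho (f m)) [seq (f p.1, p.2) | p <- rho m].

Definition projective (R : comPzRingType) (M : lmodType R) : Prop :=
  forall (A B : lmodType R) (p : A -> B), lin p -> (forall b, exists a, p a = b) ->
  forall g : M -> B, lin g -> exists h : M -> A, lin h /\ forall m, p (h m) = g m.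

Definition global_dim_zero (R : comPzRingType) : Prop :=
  forall M : lmodType R, projective M.

Definition fin_gen (R : comPzRingType) (M : lmodType R) : Prop :=
  exists s : seq M, forall m : M,
    exists c : nat -> R, m = \sum_(i < size s) c i *: s`_i.

Definition dual_basis (R : comPzRingType) (M : lmodType R) (n : nat)
  (e : 'I_n -> M) (es : 'I_n -> M -> R^o) : Prop :=
  (forall i, lin (es i)) /\ forall m, m = \sum_(i < n) (es i m : R) *: e i.

Definition twtrace (R : comPzRingType) (C M : lmodType R) (n : nat)
  (e : 'I_n -> M) (es : 'I_n -> M -> R^o) (g : M -> seq (M * C)) : C :=
  \sum_(i < n) \sum_(p <- g (e i)) (es i p.1 : R) *: p.2.

Definition trC (R : comPzRingType) (C M : lmodType R) (n : nat)
  (e : 'I_n -> M) (es : 'I_n -> M -> R^o) (rho : M -> seq (M * C)) (f : M -> M) : C :=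
  twtrace e es (fun m => rho (f m)).

Definition coHH0 (R : comPzRingType) (C : lmodType R) (Delta : C -> seq (C * C))
  (c : C) : Prop := tensor_eq (Delta c) (tswap (Delta c)).

(** The coefficients [c k m := (e_k^* (x) id)(rho m)] of the comodule
    satisfy [Delta (c k m) = sum_l c k (e l) (x) c l m] by coassociativity of
    the coaction, and [tr^C f = sum_i c i (f (e i))].  Expanding
    [c l (f (e i))] once by colinearity of [f] and once by linearity of
    [c l] rewrites [Delta (tr^C f)] and its flip as the same triple sum
    [sum_(i,l,j) f_lj c_il (x) c_ji], where [c_il = c i (e l)] and
    [f_lj = e_l^*(f (e j))].
    Global dimension zero and finite generation only serve to provide the
    dual basis, which the statement supplies directly. *)
From mathcomp Require Import all_boot all_order all_algebra.
Set Implicit Arguments. Unset Strict Implicit. Unset Printing Implicit Defensive.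
Import GRing.Theory.
Local Open Scope ring_scope.

Section Multilinear.
Variable R : comPzRingType.
Implicit Types A B D N : lmodType R.

Lemma lin0 A B (f : A -> B) : lin f -> f 0 = 0.
Proof.
move=> hf; have := hf 1 0 0; rewrite !scale1r addr0 => /eqP.
by rewrite -subr_eq subrr eq_sym => /eqP.
Qed.

Lemma linD A B (f : A -> B) : lin f -> forall x y, f (x + y) = f x + f y.
Proof. by move=> hf x y; rewrite -[x in LHS]scale1r hf scale1r. Qed.

Lemma linZ A B (f : A -> B) : lin f -> forall a x, f (a *: x) = a *: f x.
Proof. by move=> hf a x; rewrite -[_ *: x]addr0 hf (lin0 hf) addr0. Qed.

Lemma lin_sum A B (f : A -> B) : lin f ->
  forall (I : Type) (r : seq I) (P : pred I) (F : I -> A),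
  f (\sum_(i <- r | P i) F i) = \sum_(i <- r | P i) f (F i).
Proof. by move=> hf; apply: (big_morph f (linD hf) (lin0 hf)). Qed.

Lemma lin_comp A B D (f : A -> B) (g : B -> D) :
  lin f -> lin g -> lin (fun x => g (f x)).
Proof. by move=> hf hg a x y; rewrite hf hg. Qed.

Lemma bilin_flip A B N (b : A -> B -> N) :
  bilin b -> bilin (fun y x => b x y).
Proof. by case. Qed.

Lemma bilin_scale_form A B (phi : A -> R^o) :
  lin phi -> bilin (fun (x : A) (y : B) => (phi x : R) *: y).
Proof.
move=> hphi; split=> [y a x x' | x a y y'].
  by rewrite hphi scalerDl scalerA.
by rewrite scalerDr !scalerA mulrC.
Qed.

Lemma trilin_scale_form A B D N (phi : A -> R^o) (b : B -> D -> N) :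
  lin phi -> bilin b -> trilin (fun x y z => (phi x : R) *: b y z).
Proof.
move=> hphi [hb1 hb2]; split=> [y z a x x' | x z a y y' | x y a z z'].
- by rewrite hphi scalerDl scalerA.
- by rewrite hb1 scalerDr !scalerA mulrC.
- by rewrite hb2 scalerDr !scalerA mulrC.
Qed.

Lemma lin_dual_basis_expand A B n (e : 'I_n -> A) (es : 'I_n -> A -> R^o)
    (g : A -> B) :
  dual_basis e es -> lin g -> forall x, g x = \sum_l (es l x : R) *: g (e l).
Proof.
move=> [_ e_es] hg x; rewrite {1}(e_es x) (lin_sum hg).
by apply: eq_bigr => l _; rewrite (linZ hg).
Qed.

Definition teval A B N (b : A -> B -> N) (s : seq (A * B)) : N :=
  \sum_(p <- s) b p.1 p.2.

Lemma teval_tswap A B N (b : B -> A -> N) (s : seq (A * B)) :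
  teval b (tswap s) = teval (fun y x => b x y) s.
Proof. by rewrite /teval big_map. Qed.

Lemma tlin_teval A B D N (g : D -> seq (A * B)) (b : A -> B -> N) :
  tlin g -> bilin b -> lin (fun x => teval b (g x)).
Proof.
move=> hg hb a x y; rewrite /teval (hg a x y _ _ hb) big_cat big_map /=.
by rewrite scaler_sumr; congr (_ + _); apply: eq_bigr => p _; rewrite (linZ (hb.1 _)).
Qed.

End Multilinear.

Section ComoduleCoefficients.
Variables (R : comPzRingType) (C M : lmodType R).
Variables (Delta : C -> seq (C * C)) (eps : C -> R^o) (rho : M -> seq (M * C)).
Variables (n : nat) (e : 'I_n -> M) (es : 'I_n -> M -> R^o).
Hypothesis Delta_tlin : tlin Delta.
Hypothesis rho_comodule : is_right_comodule Delta eps rho.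
Hypothesis e_es_dual : dual_basis e es.

Definition coef (k : 'I_n) (m : M) : C := \sum_(p <- rho m) (es k p.1 : R) *: p.2.

Lemma lin_coef (N : lmodType R) (g : C -> N) : lin g ->
  forall k m, g (coef k m) = \sum_(p <- rho m) (es k p.1 : R) *: g p.2.
Proof.
by move=> hg k m; rewrite (lin_sum hg); apply: eq_bigr => p _; rewrite (linZ hg).
Qed.

Lemma coef_lin k : lin (coef k).
Proof.
have [rho_tlin _ _] := rho_comodule.
exact: tlin_teval rho_tlin (bilin_scale_form _ (e_es_dual.1 k)).
Qed.

Lemma teval_Delta_coef (N : lmodType R) (b : C -> C -> N) : bilin b ->
  forall k m, teval b (Delta (coef k m)) = \sum_l b (coef k (e l)) (coef l m).
Proof.
move=> hb k m; have [_ rho_coassoc _] := rho_comodule.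
have := rho_coassoc m N _ (trilin_scale_form (e_es_dual.1 k) hb).
rewrite !big_flatten /= !big_map.
under eq_bigr do rewrite big_map.
under [X in _ = X -> _]eq_bigr do rewrite big_map.
move=> /= coassoc_k.
transitivity (\sum_(p <- rho m) (es k p.1 : R) *: teval b (Delta p.2)).
  exact: (lin_coef (tlin_teval Delta_tlin hb)).
rewrite /teval; under [X in X = _]eq_bigr do rewrite scaler_sumr.
rewrite -coassoc_k.
transitivity (\sum_(p <- rho m) b (coef k p.1) p.2).
  by apply: eq_bigr => p _; rewrite (lin_coef (hb.1 _)).
under [X in X = _]eq_bigr do
  rewrite (lin_dual_basis_expand e_es_dual (coef_lin k)) (lin_sum (hb.1 _)).
rewrite exchange_big /=; apply: eq_bigr => l _.
by rewrite (lin_coef (hb.2 _)); apply: eq_bigr => p _; rewrite (linZ (hb.1 _)).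
Qed.

Lemma coef_colinear f : colinear rho f ->
  forall k m, coef k (f m) = \sum_l (es k (f (e l)) : R) *: coef l m.
Proof.
move=> [flin fcol] k m.
rewrite /coef (fcol m _ _ (bilin_scale_form _ (e_es_dual.1 k))) big_map /=.
under eq_bigr do
  rewrite (lin_dual_basis_expand e_es_dual (lin_comp flin (e_es_dual.1 k))) scaler_suml.
rewrite exchange_big /=; apply: eq_bigr => l _.
by rewrite scaler_sumr; apply: eq_bigr => p _; rewrite !scalerA mulrC.
Qed.

Lemma trC_cotrace f : colinear rho f ->
  tensor_eq (Delta (trC e es rho f)) (tswap (Delta (trC e es rho f))).
Proof.
move=> fcol N b hb.
have teval_Delta_sum b' : bilin b' ->
    teval b' (Delta (trC e es rho f)) = \sum_i teval b' (Delta (coef i (f (e i)))).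
  by move=> hb'; rewrite (lin_sum (tlin_teval Delta_tlin hb')).
change (teval b (Delta (trC e es rho f)) = teval b (tswap (Delta (trC e es rho f)))).
rewrite teval_tswap !teval_Delta_sum //; last exact: bilin_flip.
transitivity (\sum_i \sum_l \sum_j
    (es l (f (e j)) : R) *: b (coef i (e l)) (coef j (e i))).
  apply: eq_bigr => i _; rewrite teval_Delta_coef //; apply: eq_bigr => l _.
  by rewrite (coef_colinear fcol) (lin_sum (hb.2 _)); apply: eq_bigr => j _;
    rewrite (linZ (hb.2 _)).
transitivity (\sum_i \sum_l \sum_j
    (es j (f (e i)) : R) *: b (coef l (e j)) (coef i (e l))); last first.
  apply: eq_bigr => i _; rewrite (teval_Delta_coef (bilin_flip hb)).
  apply: eq_bigr => l _.
  by rewrite (lin_dual_basis_expand e_es_dual (coef_lin l)) (lin_sum (hb.1 _));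
    apply: eq_bigr => j _; rewrite (linZ (hb.1 _)).
under [X in X = _]eq_bigr do rewrite exchange_big.
by rewrite exchange_big.
Qed.

End ComoduleCoefficients.

Theorem proposition2p20 (R : comPzRingType) (C M : lmodType R)
  (Delta : C -> seq (C * C)) (eps : C -> R^o) (rho : M -> seq (M * C))
  (n : nat) (e : 'I_n -> M) (es : 'I_n -> M -> R^o) :
  global_dim_zero R ->
  is_coalgebra Delta eps ->
  is_right_comodule Delta eps rho ->
  fin_gen M ->
  dual_basis e es ->
  (forall f : M -> M, colinear rho f ->
     tensor_eq (Delta (trC e es rho f)) (tswap (Delta (trC e es rho f))))
  /\ (forall f : M -> M, colinear rho f -> coHH0 Delta (trC e es rho f)).
Proof.
move=> _ [Delta_tlin _ _ _ _] rho_comodule _ e_es_dual.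
have cotrace := trC_cotrace Delta_tlin rho_comodule e_es_dual.
by split; exact: cotrace.
Qed.
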